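(* For every fixed $d\ge 0$, the class $\mathcal{S}_d$ is monotone and tiny.
   Context: For $d\ge0$, $\mathcal{S}_d$ is the class of all graphs $G$ such that for every integer $k$ with $1000^{10(d+1)}\le k\le |V(G)|$, every $k$-vertex subgraph of $G$ has at most $k-1+k/\ln k$ edges. A class is monotone if closed under isomorphism and under taking subgraphs; it is tiny if it is hereditary (closed under induced subgraphs) and there is a constant $c$ such that for every $n$ it contains at most $c^n$ unlabeled (up to isomorphism) $n$-vertex graphs. *)

From Stdlib Require Import Reals.
From mathcomp Require Import all_boot.
From mathcomp Require Import perm boolp.

Set Implicit Arguments.
Unset Strict Implicit.
Unset Printing Implicit Defensive.

Definition simple_graph (T : finType) (e : rel T) : Prop :=
  (forall x y, e x y = e y x) /\ (forall x, e x x = false).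

(* A class of graphs. Membership is only meaningful for simple graphs. *)
Definition graph_class := forall T : finType, rel T -> Prop.

Definition edges (T : finType) (e : rel T) : {set {set T}} :=
  [set [set x; y] | x in T, y in T & e x y].

Definition is_subgraph (T : finType) (e : rel T) (S : {set T})
  (F : {set {set T}}) : Prop :=
  F \subset edges e /\ (forall f, f \in F -> f \subset S).

Definition S_class (d : nat) : graph_class :=
  fun T e => simple_graph e /\
    forall k : nat, 1000 ^ (10 * (d + 1)) <= k <= #|T| ->
    forall (S : {set T}) (F : {set {set T}}),
      #|S| = k -> is_subgraph e S F ->
      Rle (INR #|F|)
          (Rplus (Rminus (INR k) R1) (Rdiv (INR k) (ln (INR k)))).

Definition iso_closed (C : graph_class) : Prop :=
  forall (T T' : finType) (e : rel T) (e' : rel T'),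
    simple_graph e' -> C T e ->
    (exists f : T' -> T, bijective f /\ forall x y, e' x y = e (f x) (f y)) ->
    C T' e'.

(* Closed under (not necessarily induced) subgraphs, up to isomorphism:
   H is a subgraph of G iff H embeds injectively in G preserving edges. *)
Definition subgraph_closed (C : graph_class) : Prop :=
  forall (T T' : finType) (e : rel T) (e' : rel T'),
    simple_graph e' -> C T e ->
    (exists f : T' -> T, injective f /\ forall x y, e' x y -> e (f x) (f y)) ->
    C T' e'.

Definition induced_closed (C : graph_class) : Prop :=
  forall (T T' : finType) (e : rel T) (e' : rel T'),
    simple_graph e' -> C T e ->
    (exists f : T' -> T, injective f /\ forall x y, e' x y = e (f x) (f y)) ->
    C T' e'.

Definition monotone (C : graph_class) : Prop :=
  iso_closed C /\ subgraph_closed C.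

Definition hereditary (C : graph_class) : Prop :=
  iso_closed C /\ induced_closed C.

(* Labelled graphs on 'I_n, encoded by their adjacency table. *)
Definition adj_rel n (g : {ffun 'I_n * 'I_n -> bool}) : rel 'I_n :=
  fun x y => g (x, y).

Definition simpleb n (g : {ffun 'I_n * 'I_n -> bool}) : bool :=
  [forall x, forall y, g (x, y) == g (y, x)] && [forall x, ~~ g (x, x)].

Definition isob n : rel {ffun 'I_n * 'I_n -> bool} :=
  fun g h => [exists p : {perm 'I_n},
                [forall x, forall y, g (x, y) == h (p x, p y)]].

(* Number of unlabeled (up to isomorphism) n-vertex graphs in C:
   number of isomorphism classes of simple graphs on 'I_n lying in C. *)
Definition n_unlabeled (C : graph_class) (n : nat) : nat :=
  #|equivalence_partition (@isob n)
      [set g : {ffun 'I_n * 'I_n -> bool} |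
         simpleb g && `[< C 'I_n (adj_rel g) >]]|.

Definition tiny (C : graph_class) : Prop :=
  hereditary C /\
  exists c : R, forall n : nat, Rle (INR (n_unlabeled C n)) (pow c n).

From Stdlib Require Import Reals Lra.
From mathcomp Require Import all_boot perm boolp zify.

Set Implicit Arguments.
Unset Strict Implicit.
Unset Printing Implicit Defensive.

(* Monotonicity is immediate: an injective, edge-preserving map carries every
   subgraph of G' to a subgraph of G of the same size.

   For tininess, relabel the vertices so that f(v), the smallest neighbour of v
   preceding it (or v itself if there is none), is nondecreasing in v; swapping
   two consecutive vertices that violate this decreases f lexicographically, so
   such a labelling exists.  The vertices with f(r) = r then cut the vertex set
   into intervals ("blocks") with no edges between blocks, the pairs (f v, v)
   form a spanning tree of each block, and the graph is determined by the
   nondecreasing sequence f (at most C(2n, n) choices) together with the set X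
   of the remaining "extra" edges.  Give an extra edge u < v the weight
   (v - u)(v - u + 2) < 3 k^2, where k is the size of its block.  A block of size
   k >= N has at most k / ln k extra edges by the defining condition of S_d, and a
   smaller block at most k^2 edges in all, so the weight of X is at most K^n with
   K = (3 N^2)^N.  Finally there are at most M 2^n edge sets of weight at most M,
   because the sum over all X of 1 / weight(X) factors as the product over v of
   prod_{d=1}^{v} (1 + 1/(d(d+2))) = 2(v+1)/(v+2) < 2.  Altogether S_d has at most
   (8 K)^n unlabelled graphs on n vertices. *)

(** * Monotonicity *)

Lemma edgesP (T : finType) (e : rel T) (A : {set T}) :
  reflect (exists x y, e x y /\ A = [set x; y]) (A \in edges e).
Proof.
apply: (iffP imset2P) => [[x y _] | [x [y [exy ->]]]].
  by rewrite inE => /andP[_ exy] ->; exists x, y.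
by exists x y; rewrite // inE exy andbT.
Qed.

Lemma S_class_subgraph_closed d : subgraph_closed (S_class d).
Proof.
move=> T T' e e' se' [_ sparse] [f [f_inj f_hom]].
split=> // k /andP[Nk kT'] S' F' cardS' [F'_edges F'_S'].
have cardF : #|[set f @: (A : {set T'}) | A in F']| = #|F'|.
  by rewrite card_imset //; apply: imset_inj.
rewrite -cardF; apply: (sparse k _ (f @: S')).
- by rewrite Nk (leq_trans kT' (leq_card f f_inj)).
- by rewrite card_imset.
split=> [|B].
- apply/subsetP=> B /imsetP[A AF' ->].
  have /edgesP[x [y [exy ->]]] := subsetP F'_edges A AF'.
  by apply/edgesP; exists (f x), (f y); rewrite f_hom // imsetU1 imset_set1.
- by move=> /imsetP[A AF' ->]; exact: imsetS (F'_S' A AF').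
Qed.

Lemma S_class_monotone d : monotone (S_class d).
Proof.
split; last exact: S_class_subgraph_closed.
move=> T T' e e' se' eS [f [/bij_inj f_inj f_iso]]; apply: (S_class_subgraph_closed se' eS).
by exists f; split=> // x y; rewrite f_iso.
Qed.

Lemma S_class_hereditary d : hereditary (S_class d).
Proof.
split; first exact: (S_class_monotone d).1.
move=> T T' e e' se' eS [f [f_inj f_iso]]; apply: (S_class_subgraph_closed se' eS).
by exists f; split=> // x y; rewrite f_iso.
Qed.

Lemma expn_pow m k : m ^ k = Nat.pow m k.
Proof. by elim: k => // k IHk; rewrite expnS IHk. Qed.

Section RealBounds.
Local Open Scope R_scope.

Lemma ln_le x y : 0 < x -> x <= y -> ln x <= ln y.
Proof.
move=> x_gt0 /Rle_lt_or_eq_dec[xy | ->]; last exact: Rle_refl.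
exact/Rlt_le/ln_increasing.
Qed.

(* [x <= k / ln k] gives [x ln (3 k^2) <= 3 x ln k <= 3 k <= k ln 27]. *)
Lemma expn_le_of_le_div_ln (k x : nat) : (3 <= k)%N ->
  INR x <= INR k / ln (INR k) -> ((3 * k ^ 2) ^ x <= 27 ^ k)%N.
Proof.
move=> k_ge3 x_le.
have k3 : 3 <= INR k by have /= := le_INR 3 k (leP k_ge3); lra.
have lnk_gt0 : 0 < ln (INR k) by rewrite -ln_1; apply: ln_increasing; lra.
have ln3_ge1 : 1 <= ln 3.
  by rewrite -(ln_exp 1); apply: ln_le; [exact: exp_pos | exact: exp_le_3].
have base_gt0 : 0 < INR (3 * k ^ 2).
  by apply/lt_0_INR/ltP; rewrite muln_gt0 expn_gt0; lia.
have ln_base : ln (INR (3 * k ^ 2)) <= 3 * ln (INR k).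
  have -> : 3 * ln (INR k) = INR 3 * ln (INR k) by rewrite /=; ring.
  rewrite -ln_pow; last lra.
  apply: ln_le => //.
  by rewrite -pow_INR; apply/le_INR/leP; rewrite -expn_pow [(k ^ 3)%N]expnS leq_mul2r k_ge3 orbT.
have x_lnk : INR x * (3 * ln (INR k)) <= 3 * INR k.
  have -> : 3 * INR k = INR k / ln (INR k) * (3 * ln (INR k)) by field; lra.
  by apply: Rmult_le_compat_r; lra.
apply/leP/INR_le; rewrite (expn_pow (3 * k ^ 2)) (expn_pow 27) !pow_INR.
have -> : INR 27 = 3 ^ 3 by simpl; ring.
apply: Rnot_lt_le => /(ln_increasing _ _ (pow_lt (3 ^ 3) k ltac:(lra))).
rewrite !ln_pow //; try lra.
rewrite [INR 3]/=.
have := Rmult_le_compat_l (INR x) _ _ (pos_INR x) ln_base; nra.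
Qed.

End RealBounds.

(* A block of [k] vertices carrying [e] extra edges, each of weight [< 3 k^2]:
   small blocks have [e <= k^2], large ones are sparse. *)
Lemma block_weight_bound N k e : 3 <= N -> e <= k * k ->
  (N <= k -> Rle (INR e) (Rdiv (INR k) (ln (INR k)))) ->
  (3 * k ^ 2) ^ e <= ((3 * N ^ 2) ^ N) ^ k.
Proof.
move=> N_ge3 e_le sparse; have [k_ltN | N_le_k] := ltnP k N.
  have [k0 | k_gt0] := posnP k; first by move: e_le; rewrite k0 muln0 leqn0 => /eqP ->.
  apply: (@leq_trans ((3 * k ^ 2) ^ (k * k))).
    by rewrite leq_pexp2l ?muln_gt0 ?expn_gt0 ?k_gt0.
  apply: (@leq_trans ((3 * N ^ 2) ^ (k * k))).
    by rewrite leq_exp2r ?muln_gt0 ?k_gt0 // leq_mul2l leq_sqr ltnW.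
  rewrite -expnM leq_pexp2l ?muln_gt0 ?expn_gt0 ?(leq_trans _ N_ge3) //.
  by rewrite mulnC leq_mul2l ltnW ?orbT.
have k_ge3 := leq_trans N_ge3 N_le_k.
apply: leq_trans (expn_le_of_le_div_ln k_ge3 (sparse N_le_k)) _.
rewrite leq_exp2r ?(leq_trans _ k_ge3) //.
apply: (@leq_trans (3 * N ^ 2)); first by rewrite (@leq_mul2l 3 9) (@leq_sqr 3).
by rewrite -{1}(expn1 (3 * N ^ 2)) leq_pexp2l ?muln_gt0 ?expn_gt0 ?(leq_trans _ N_ge3).
Qed.

Lemma leq_bin_exp2 m k : 'C(m, k) <= 2 ^ m.
Proof.
elim: m k => [|m IHm] [|k] //; first by rewrite bin0 expn_gt0.
by rewrite binS expnS mul2n -addnn leq_add.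
Qed.

(* Since [(i+1)(i+3) + 1 = (i+2)^2], the product telescopes to [2(m+1)/(m+2)]. *)
Lemma prod_succ_gap_weight m :
  (m + 2) * \prod_(0 <= i < m) (i.+1 * i.+3).+1
    = 2 * (m + 1) * \prod_(0 <= i < m) (i.+1 * i.+3).
Proof.
elim: m => [|m IHm]; first by rewrite !big_geq.
rewrite !big_nat_recr //=.
move: IHm; set P := \prod_(0 <= i < m) _; set Q := \prod_(0 <= i < m) _; nia.
Qed.

Lemma prod_succ_gap_weight_le m :
  \prod_(0 <= i < m) (i.+1 * i.+3).+1 <= 2 * \prod_(0 <= i < m) (i.+1 * i.+3).
Proof.
have := prod_succ_gap_weight m.
set P := \prod_(0 <= i < m) _; set Q := \prod_(0 <= i < m) _; nia.
Qed.

(* Markov's inequality for the measure giving [X \subset U] the mass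
   [\prod_(x in U :\: X) w x]; the total mass is [\prod_(x in U) (w x).+1]. *)
Lemma card_light_subsets (T : finType) (U : {set T}) (w : T -> nat) (M : nat) :
  #|[set X : {set T} | (X \subset U) && (\prod_(x in X) w x <= M)]| * \prod_(x in U) w x
    <= M * \prod_(x in U) (w x).+1.
Proof.
pose F x := if x \in U then 1 else 0.
pose G x := if x \in U then w x else 1.
pose rest (X : {set T}) := \prod_x (if x \in X then F x else G x).
have restE (X : {set T}) : X \subset U -> rest X = \prod_(x in U :\: X) w x.
  move=> XU; rewrite big_mkcond; apply: eq_bigr => x _; rewrite /F /G inE.
  by case: (boolP (x \in X)) => [/(subsetP XU) -> | _] //=; case: (x \in U).
have sum_rest : \sum_(X : {set T}) rest X = \prod_(x in U) (w x).+1.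
  rewrite -(bigA_distr 1 addn F G) [RHS]big_mkcond; apply: eq_bigr => x _.
  by rewrite /F /G; case: (x \in U).
rewrite -sum_rest big_distrr /= -sum1_card big_distrl /=.
set light := [set X : {set T} | _].
rewrite [X in _ <= X](bigID (fun X => X \in light)) /= (leq_trans _ (leq_addr _ _)) //.
apply: leq_sum => X; rewrite inE => /andP[XU XM].
by rewrite mul1n (big_setID X) /= (setIidPr XU) restE // leq_mul2r XM orbT.
Qed.

Definition sparsity_threshold d := 1000 ^ (10 * (d + 1)).

Lemma sparsity_threshold_ge3 d : 3 <= sparsity_threshold d.
Proof. by rewrite (leq_trans _ (leq_pexp2l _ (_ : 1 <= 10 * (d + 1)))) ?muln_gt0 ?addn1. Qed.

Definition weight_const d := (3 * sparsity_threshold d ^ 2) ^ sparsity_threshold d.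

Section LabelledGraphs.
Variable n : nat.
Notation graph := {ffun 'I_n * 'I_n -> bool}.
Implicit Types (g h : graph) (a b i r u v w : 'I_n).

(** * Orderings with sorted first neighbours *)

(* The smallest neighbour of [v] preceding it, or [v] itself if there is none. *)
Definition first_nbr h v : nat :=
  v - \max_(u : 'I_n | (u < v) && h (u, v)) (v - u).

Lemma first_nbr_le h v : first_nbr h v <= v.
Proof. exact: leq_subr. Qed.

Lemma first_nbr_min h u v : u < v -> h (u, v) -> first_nbr h v <= u.
Proof.
move=> uv huv; rewrite /first_nbr.
have := @leq_bigmax_cond _ (fun w : 'I_n => (w < v) && h (w, v)) (fun w : 'I_n => v - w) u.
rewrite uv huv => /(_ isT) /(leq_sub2l v) /leq_trans; apply.
by rewrite subKn // ltnW.
Qed.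

Lemma first_nbrP h v :
  first_nbr h v < v -> exists2 u : 'I_n, (u < v) && h (u, v) & first_nbr h v = u.
Proof.
rewrite /first_nbr; have [u0 Pu0 _ | none] := pickP (fun w : 'I_n => (w < v) && h (w, v)).
  rewrite (bigmax_eq_arg u0) //; case: arg_maxnP => // u /andP[uv hu] _.
  by exists u; rewrite ?uv // subKn // ltnW.
by rewrite big_pred0 ?subn0 ?ltnn.
Qed.

Lemma eq_first_nbr h h' v : (forall u : 'I_n, u < v -> h (u, v) = h' (u, v)) ->
  first_nbr h v = first_nbr h' v.
Proof.
by move=> hh'; congr (_ - _); apply: eq_bigl => u; case: ltnP => //= uv; rewrite hh'.
Qed.

Definition nbr_sorted h :=
  [forall u : 'I_n, forall v : 'I_n, (u <= v) ==> (first_nbr h u <= first_nbr h v)].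

Lemma nbr_sortedP h :
  reflect (forall u v : 'I_n, u <= v -> first_nbr h u <= first_nbr h v) (nbr_sorted h).
Proof.
apply: (iffP forallP) => [sh u v | sh u].
  by apply/implyP; move/forallP: (sh u); apply.
by apply/forallP=> v; apply/implyP/sh.
Qed.

Lemma nbr_sorted_step h :
  (forall u v : 'I_n, val v = u.+1 -> first_nbr h u <= first_nbr h v) -> nbr_sorted h.
Proof.
move=> step; apply/nbr_sortedP=> u v; case: v => m; elim: m => [|m IHm] mn /=.
  by rewrite leqn0 => /eqP u0; rewrite (_ : u = Ordinal mn) //; apply: val_inj.
rewrite leq_eqVlt => /orP[/eqP um | ]; first by rewrite (_ : u = Ordinal mn) //; apply: val_inj.
rewrite ltnS => /(IHm (ltnW mn)) /leq_trans; apply; exact: step.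
Qed.

Definition relabel g (s : {perm 'I_n}) : graph := [ffun x => g (s x.1, s x.2)].

Definition lex_lt (f1 f2 : 'I_n -> nat) : bool :=
  [exists a : 'I_n, (f1 a < f2 a) && [forall i : 'I_n, (i < a) ==> (f1 i == f2 i)]].

Lemma lex_lt_irr f : ~~ lex_lt f f.
Proof. by apply/existsP=> -[a]; rewrite ltnn. Qed.

Lemma lex_lt_trans f1 f2 f3 : lex_lt f1 f2 -> lex_lt f2 f3 -> lex_lt f1 f3.
Proof.
move=> /existsP[a /andP[lta /forallP Ea]] /existsP[b /andP[ltb /forallP Eb]].
have E1 i : i < a -> f1 i = f2 i by move=> ia; apply/eqP/(implyP (Ea i)).
have E2 i : i < b -> f2 i = f3 i by move=> ib; apply/eqP/(implyP (Eb i)).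
apply/existsP; case: (ltngtP a b) => [ab | ba | /val_inj eab].
- exists a; rewrite -E2 // lta; apply/forallP=> i; apply/implyP=> ia.
  by rewrite E1 // E2 // (ltn_trans ia ab).
- exists b; rewrite E1 // ltb; apply/forallP=> i; apply/implyP=> ib.
  by rewrite E1 ?E2 // (ltn_trans ib ba).
- subst b; exists a; rewrite (ltn_trans lta ltb).
  by apply/forallP=> i; apply/implyP=> ia; rewrite E1 ?E2.
Qed.

(* Swapping two consecutive vertices [a], [a+1] that violate sortedness
   gives [a] an earlier first neighbour and fixes all vertices before [a]. *)
Lemma relabel_swap_lex_lt g s (a b : 'I_n) :
  val b = a.+1 -> first_nbr (relabel g s) b < first_nbr (relabel g s) a ->
  lex_lt (first_nbr (relabel g (tperm a b * s)%g)) (first_nbr (relabel g s)).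
Proof.
move=> ba lt_ba.
have fix_below u : u < a -> tperm a b u = u.
  move=> ua; apply: tpermD; rewrite -val_eqE ?ba gtn_eqF //.
  exact: ltn_trans ua (ltnSn a).
apply/existsP; exists a; apply/andP; split.
- have qb_lt_a := leq_trans lt_ba (first_nbr_le _ a).
  have /first_nbrP[u /andP[ub hub] uE] : first_nbr (relabel g s) b < b.
    by rewrite (leq_trans qb_lt_a) // ba.
  have ua : u < a by rewrite -uE.
  apply: leq_ltn_trans lt_ba; rewrite uE; apply: first_nbr_min => //.
  by move: hub; rewrite !ffunE /= !permM tpermL fix_below.
- apply/forallP=> i; apply/implyP=> ia; apply/eqP/eq_first_nbr => u ui.
  by rewrite !ffunE /= !permM !fix_below // (ltn_trans ui ia).
Qed.

Lemma nbr_unsorted_step h : ~~ nbr_sorted h ->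
  exists a b, val b = a.+1 /\ first_nbr h b < first_nbr h a.
Proof.
move=> unsorted.
have [/existsP[a /existsP[b /andP[/eqP ba lt_ba]]] | none] := boolP [exists a : 'I_n,
  exists b : 'I_n, (val b == a.+1) && (first_nbr h b < first_nbr h a)]; first by exists a, b.
case/negP: unsorted; apply: nbr_sorted_step => u v vu; rewrite leqNgt.
by apply: contraNN none => lt_vu; apply/existsP; exists u; apply/existsP; exists v; rewrite vu eqxx.
Qed.

Lemma exists_nbr_sorted_relabel g : exists s, nbr_sorted (relabel g s).
Proof.
pose below s := [set s' | lex_lt (first_nbr (relabel g s')) (first_nbr (relabel g s))].
have shrink s : ~~ nbr_sorted (relabel g s) -> exists s', below s' \proper below s.
  move=> /nbr_unsorted_step[a [b [ba lt_ba]]]; exists (tperm a b * s)%g.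
  have lt_swap := relabel_swap_lex_lt ba lt_ba.
  apply/properP; split; first by apply/subsetP => x; rewrite !inE => /lex_lt_trans; apply.
  by exists (tperm a b * s)%g; rewrite !inE ?lex_lt_irr.
suff: forall m s, #|below s| <= m -> exists s', nbr_sorted (relabel g s').
  by move=> /(_ _ 1%g (leqnn _)).
elim=> [|m IHm] s below_s.
all: have [|/shrink[s' /proper_card lt_below]] := boolP (nbr_sorted (relabel g s)).
- by exists s.
- by move: lt_below; rewrite ltnNge (leq_trans below_s).
- by exists s.
- by apply: (IHm s'); rewrite -ltnS (leq_trans lt_below).
Qed.

(** * Blocks *)

(* Vertices [r] with [first_nbr h r = r] start blocks; vertex 0 always does. *)
Definition block_rootn h v : nat :=
  \max_(r : 'I_n | (r <= v) && (first_nbr h r == r)) r.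

Lemma block_rootn_le h v : block_rootn h v <= v.
Proof. by apply/bigmax_leqP => r /andP[]. Qed.

Lemma block_rootn_ge h r v : r <= v -> first_nbr h r = r -> r <= block_rootn h v.
Proof.
move=> rv qr; apply: (@leq_bigmax_cond _ (fun r : 'I_n => (r <= v) && (first_nbr h r == r))).
by rewrite rv qr eqxx.
Qed.

Lemma block_rootnP h v : exists2 r : 'I_n, val r = block_rootn h v & first_nbr h r = r.
Proof.
have n_gt0 : 0 < n by apply: leq_ltn_trans (ltn_ord v).
have P0 : (Ordinal n_gt0 <= v) && (first_nbr h (Ordinal n_gt0) == 0).
  by rewrite -leqn0 first_nbr_le.
rewrite /block_rootn (bigmax_eq_arg (Ordinal n_gt0)) //.
by case: arg_maxnP => // r /andP[_ /eqP qr] _; exists r.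
Qed.

Lemma block_rootn_between h w v :
  block_rootn h v <= w -> w <= v -> block_rootn h w = block_rootn h v.
Proof.
move=> rw wv; have [r rE qr] := block_rootnP h v.
have [r' r'E qr'] := block_rootnP h w.
have r'v : r' <= v by rewrite r'E (leq_trans (block_rootn_le h w)).
have rw' : r <= w by rewrite rE.
by apply/eqP; rewrite eqn_leq -{1}r'E -{2}rE !block_rootn_ge.
Qed.

Lemma block_rootn_id h v : first_nbr h v = v -> block_rootn h v = v.
Proof. by move=> qv; apply/eqP; rewrite eqn_leq block_rootn_le block_rootn_ge. Qed.

(* An edge [(u, v)] cannot jump over a block start [r],
   otherwise [first_nbr h v <= u < r = first_nbr h r]. *)
Lemma block_rootn_edge h u v :
  nbr_sorted h -> u < v -> h (u, v) -> block_rootn h u = block_rootn h v.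
Proof.
move=> /nbr_sortedP sorted_h uv huv; apply: block_rootn_between (ltnW uv).
have [r rE qr] := block_rootnP h v; rewrite -rE leqNgt; apply/negP => ur.
have rv : r <= v by rewrite rE block_rootn_le.
by have := leq_trans (sorted_h r v rv) (first_nbr_min uv huv); rewrite qr leqNgt ur.
Qed.

Definition block_root h v : 'I_n := insubd v (block_rootn h v).

Lemma block_rootE h v : val (block_root h v) = block_rootn h v.
Proof. by rewrite val_insubd (leq_ltn_trans (block_rootn_le h v)). Qed.

Lemma block_root_edge h u v :
  nbr_sorted h -> u < v -> h (u, v) -> block_root h u = block_root h v.
Proof.
by move=> sorted_h uv huv; apply: val_inj; rewrite !block_rootE (block_rootn_edge sorted_h uv huv).
Qed.

Definition block h r := [set v | block_root h v == r].
Definition up_edges h := [set x : 'I_n * 'I_n | (x.1 < x.2) && h x].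
Definition tree_pairs h := [set x : 'I_n * 'I_n | val x.1 == first_nbr h x.2].
Definition extra_edges h := up_edges h :\: tree_pairs h.
Definition block_edges h r := [set x in up_edges h | block_root h x.2 == r].

Lemma edge_span_lt_block h a b : nbr_sorted h -> a < b -> h (a, b) ->
  b - a < #|block h (block_root h b)|.
Proof.
move=> sorted_h ab hab; have root_ab := block_rootn_edge sorted_h ab hab.
pose f (i : 'I_(b - a).+1) : 'I_n := insubd b (a + i).
have fE (i : 'I_(b - a).+1) : val (f i) = a + i.
  by rewrite val_insubd; have := ltn_ord i; have := ltn_ord b; case: ifP => //; lia.
have f_inj : injective f by move=> i j /(congr1 val); rewrite !fE => /addnI /val_inj.
have : f @: [set: 'I_(b - a).+1] \subset block h (block_root h b).
  apply/subsetP => w /imsetP[i _ ->]; rewrite inE; apply/eqP/val_inj.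
  rewrite !block_rootE; apply: block_rootn_between; rewrite fE.
  - by rewrite -root_ab (leq_trans (block_rootn_le h a)) // leq_addr.
  - by have := ltn_ord i; lia.
by move/subset_leq_card; rewrite card_imset // cardsT card_ord.
Qed.

Lemma card_block_edges h r :
  nbr_sorted h -> #|block_edges h r| <= #|block h r| * #|block h r|.
Proof.
move=> sorted_h; rewrite -cardsX; apply: subset_leq_card; apply/subsetP => -[a b].
rewrite !inE /= => /andP[/andP[ab hab] /eqP rb].
by rewrite (block_root_edge sorted_h ab hab) rb eqxx.
Qed.

Lemma card_block_tree h r : #|block h r| - 1 <= #|block_edges h r :&: tree_pairs h|.
Proof.
suff: #|block h r :\ r| <= #|block_edges h r :&: tree_pairs h|.
  by have := cardsD1 r (block h r); lia.
apply: leq_trans (leq_imset_card (fun x : 'I_n * 'I_n => x.2) _).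
apply: subset_leq_card; apply/subsetP => v; rewrite !inE => /andP[vr /eqP rv].
have /first_nbrP[u /andP[uv huv] qu] : first_nbr h v < v.
  rewrite ltn_neqAle first_nbr_le andbT; apply: contraNneq vr => qv.
  by apply/eqP/val_inj; rewrite -rv block_rootE block_rootn_id.
by apply/imsetP; exists (u, v); rewrite // !inE /= uv huv rv qu !eqxx.
Qed.

Lemma set2_ord_inj a b a' b' :
  a < b -> a' < b' -> [set a; b] = [set a'; b'] -> (a, b) = (a', b').
Proof.
move=> ab ab' E.
have := set21 a b; have := set22 a b; have := set21 a' b'.
rewrite -{1}E E !inE => /orP[|] /eqP e1 /orP[|] /eqP e2 /orP[|] /eqP e3;
  subst => //; lia.
Qed.

Lemma block_extra_sparse d h r : S_class d (adj_rel h) -> nbr_sorted h ->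
  sparsity_threshold d <= #|block h r| ->
  Rle (INR #|block_edges h r :\: tree_pairs h|)
      (Rdiv (INR #|block h r|) (ln (INR #|block h r|))).
Proof.
move=> [_ sparse] sorted_h large.
pose F := [set [set x.1; x.2] | x in block_edges h r].
have cardF : #|F| = #|block_edges h r|.
  apply: card_in_imset => -[a b] [a' b'].
  by rewrite !inE /= => /andP[/andP[ab _] _] /andP[/andP[ab' _] _]; apply: set2_ord_inj.
have F_sub : is_subgraph (adj_rel h) (block h r) F.
  split=> [|A].
  - apply/subsetP => A /imsetP[[a b] + ->]; rewrite !inE /= => /andP[/andP[_ hab] _].
    by apply/edgesP; exists a, b.
  - move=> /imsetP[[a b] + ->]; rewrite !inE /= => /andP[/andP[ab hab] /eqP rb].
    by rewrite subUset !sub1set !inE (block_root_edge sorted_h ab hab) rb eqxx.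
have := sparse _ _ (block h r) F erefl F_sub; rewrite large max_card => /(_ isT).
rewrite cardF -(cardsID (tree_pairs h)) plus_INR (_ : R1 = INR 1) //.
have := le_INR _ _ (leP (card_block_tree h r)).
rewrite minus_INR /=; first lra.
by apply/leP; rewrite (leq_trans _ large) // expn_gt0.
Qed.

Definition gap_weight (x : 'I_n * 'I_n) : nat := (x.2 - x.1) * (x.2 - x.1).+2.

Lemma block_extra_weight h r : nbr_sorted h ->
  \prod_(x in block_edges h r :\: tree_pairs h) gap_weight x
    <= (3 * #|block h r| ^ 2) ^ #|block_edges h r :\: tree_pairs h|.
Proof.
move=> sorted_h; rewrite -prod_nat_const; apply: leq_prod => -[a b].
rewrite !inE /= => /andP[_ /andP[/andP[ab hab] /eqP rb]].
by have := edge_span_lt_block sorted_h ab hab; rewrite rb /gap_weight /=; nia.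
Qed.

Lemma extra_weight_le d h : S_class d (adj_rel h) -> nbr_sorted h ->
  \prod_(x in extra_edges h) gap_weight x <= weight_const d ^ n.
Proof.
move=> hS sorted_h.
have sum_blocks : \sum_r #|block h r| = n.
  transitivity (\sum_(v : 'I_n) 1); last by rewrite sum1_card card_ord.
  rewrite [RHS](partition_big (block_root h) xpredT) //=.
  by apply: eq_bigr => r _; rewrite -sum1_card; apply: eq_bigl => v; rewrite inE.
apply: (@leq_trans (\prod_r weight_const d ^ #|block h r|)); first last.
  by rewrite -expn_sum sum_blocks.
rewrite (partition_big (fun x : 'I_n * 'I_n => block_root h x.2) xpredT) //=.
apply: leq_prod => r _.
rewrite (eq_bigl (mem (block_edges h r :\: tree_pairs h))); last first.
  by move=> x; rewrite /extra_edges /block_edges !inE !andbA.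
apply: leq_trans (block_extra_weight r sorted_h) _.
apply: block_weight_bound; first exact: sparsity_threshold_ge3.
- by rewrite (leq_trans (subset_leq_card (subsetDl _ _))) ?card_block_edges.
- exact: block_extra_sparse.
Qed.

(** * Counting canonical graphs *)

Definition upper_pairs := [set x : 'I_n * 'I_n | x.1 < x.2].

Definition light_sets M :=
  [set X : {set 'I_n * 'I_n} | (X \subset upper_pairs) && (\prod_(x in X) gap_weight x <= M)].

Lemma prod_upper_pairs (F : 'I_n * 'I_n -> nat) :
  \prod_(x in upper_pairs) F x = \prod_(v : 'I_n) \prod_(u : 'I_n | u < v) F (u, v).
Proof.
rewrite (exchange_big_dep xpredT) //= pair_big_dep /=.
by apply: eq_big => [[u v]|[u v] _]; rewrite ?inE.
Qed.

Lemma prod_column (f : nat -> nat) v :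
  \prod_(u : 'I_n | u < v) f (v - u) = \prod_(0 <= i < v) f i.+1.
Proof.
transitivity (\prod_(0 <= u < n | true && (u < v)) f (v - u)); first by rewrite big_mkord.
rewrite -big_nat_widen 1?ltnW // big_nat_rev /= !big_nat.
by apply: eq_bigr => i /andP[_ iv]; congr f; lia.
Qed.

Lemma card_light_sets M : #|light_sets M| <= M * 2 ^ n.
Proof.
have weight_gt0 : 0 < \prod_(x in upper_pairs) gap_weight x.
  by rewrite prodn_cond_gt0 // => -[u v]; rewrite inE /= muln_gt0 subn_gt0 => ->.
have succ_le : \prod_(x in upper_pairs) (gap_weight x).+1
                 <= 2 ^ n * \prod_(x in upper_pairs) gap_weight x.
  have -> : 2 ^ n = \prod_(v : 'I_n) 2 by rewrite prod_nat_const card_ord.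
  rewrite !prod_upper_pairs -big_split /=; apply: leq_prod => v _.
  rewrite (prod_column (fun d => (d * d.+2).+1)) (prod_column (fun d => d * d.+2)).
  exact: prod_succ_gap_weight_le.
rewrite -(leq_pmul2r weight_gt0) -mulnA (leq_trans (card_light_subsets _ _ _)) //.
by rewrite leq_mul2l succ_le orbT.
Qed.

Definition canonical_graphs M :=
  [set h | [&& simpleb h, nbr_sorted h & extra_edges h \in light_sets M]].

Definition first_nbr_tuple h : n.-tuple 'I_n.+1 := [tuple inord (first_nbr h i) | i < n].

Lemma first_nbr_tupleE h i : tnth (first_nbr_tuple h) i = first_nbr h i :> nat.
Proof. by rewrite tnth_mktuple inordK // ltnS (leq_trans (first_nbr_le h i)) // ltnW. Qed.

Lemma simpleb_sym h x y : simpleb h -> h (x, y) = h (y, x).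
Proof. by case/andP => /forallP /(_ x) /forallP /(_ y) /eqP. Qed.

Lemma simpleb_irr h x : simpleb h -> h (x, x) = false.
Proof. by case/andP => _ /forallP /(_ x) /negbTE. Qed.

Lemma adj_first_nbr_extra h u v : u < v ->
  h (u, v) = (val u == first_nbr h v) || ((u, v) \in extra_edges h).
Proof.
move=> uv; rewrite !inE /= uv /=; case: eqP => [uE | //].
have /first_nbrP[w /andP[_ hwv] wE] : first_nbr h v < v by rewrite -uE.
by rewrite (_ : u = w) //; apply: val_inj; rewrite /= uE wE.
Qed.

Lemma card_canonical_graphs M : #|canonical_graphs M| <= 'C(n + n, n) * (M * 2 ^ n).
Proof.
pose code h := (first_nbr_tuple h, extra_edges h).
have code_inj : {in canonical_graphs M &, injective code}.
  move=> h1 h2; rewrite !inE => /and3P[s1 _ _] /and3P[s2 _ _] /pair_equal_spec[E12 X12].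
  have Eq i : first_nbr h1 i = first_nbr h2 i by rewrite -!first_nbr_tupleE E12.
  apply/ffunP => -[u v]; case: (ltngtP u v) => [uv | vu | /val_inj <-].
  - by rewrite !adj_first_nbr_extra // Eq X12.
  - by rewrite simpleb_sym // [RHS]simpleb_sym // !adj_first_nbr_extra // Eq X12.
  - by rewrite !simpleb_irr.
rewrite -(card_in_imset code_inj).
apply: (@leq_trans (#|[set t : n.-tuple 'I_n.+1 | sorted leq (map val t)]| * #|light_sets M|));
  last by rewrite card_sorted_tuples leq_mul2l card_light_sets orbT.
rewrite -cardsX; apply: subset_leq_card; apply/subsetP => c /imsetP[h + ->].
rewrite !inE => /and3P[_ /nbr_sortedP sorted_h ->]; rewrite andbT.
have -> : map val (first_nbr_tuple h) = map (first_nbr h) (enum 'I_n).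
  rewrite -map_comp; apply: eq_map => i /=.
  by rewrite inordK // ltnS (leq_trans (first_nbr_le h i)) // ltnW.
rewrite sorted_map; apply: (@sub_sorted _ (fun u v : 'I_n => u <= v)) => [u v|].
  exact: sorted_h.
by have := iota_sorted 0 n; rewrite -val_enum_ord sorted_map.
Qed.

End LabelledGraphs.

Lemma leq_card_imset_coarser (T1 T2 T3 : finType) (D : {set T1})
    (f : T1 -> T2) (g : T1 -> T3) :
  {in D &, forall x y, g x = g y -> f x = f y} -> #|f @: D| <= #|g @: D|.
Proof.
move=> gf; case: (set_0Vmem D) => [-> | [x0 _]]; first by rewrite !imset0 !cards0.
pose rep y := odflt x0 [pick x in D | f x == y].
have repP y : y \in f @: D -> rep y \in D /\ f (rep y) = y.
  case/imsetP=> x xD ->; rewrite /rep; case: pickP => [x' /andP[x'D /eqP] // | /(_ x)].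
  by rewrite xD eqxx.
have rep_inj : {in f @: D &, injective (g \o rep)}.
  move=> y y' /repP[yD fy] /repP[y'D fy'] /= g_eq.
  by rewrite -fy -fy'; apply: gf.
rewrite -(card_in_imset rep_inj); apply/subset_leq_card/subsetP => z /imsetP[y yD ->].
by apply/imsetP; exists (rep y); case: (repP y yD).
Qed.

Lemma card_equivalence_partition_le (T : finType) (R : rel T) (D A : {set T}) :
  symmetric R -> transitive R -> {in D, forall x, exists2 y, y \in A & R x y} ->
  #|equivalence_partition R D| <= #|A|.
Proof.
move=> symR trR D_A; pose pk x := [pick y in A | R x y].
have pkP x : x \in D -> exists2 y, pk x = Some y & (y \in A) && R x y.
  move=> xD; rewrite /pk; case: pickP => [y Py | none]; first by exists y.
  by have [y yA xy] := D_A x xD; have := none y; rewrite yA xy.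
apply: (@leq_trans #|pk @: D|).
  apply: leq_card_imset_coarser => x y xD yD.
  have [z -> /andP[_ xz]] := pkP x xD; have [z' -> /andP[_ yz]] := pkP y yD; case=> zE.
  rewrite -{}zE in yz; have zx : R z x by rewrite symR.
  have zy : R z y by rewrite symR.
  apply/setP => t; rewrite !inE; congr (_ && _); apply/idP/idP => [xt | yt].
  - exact: trR yz (trR _ _ _ zx xt).
  - exact: trR xz (trR _ _ _ zy yt).
rewrite -(card_imset A (@Some_inj _)); apply/subset_leq_card/subsetP => o /imsetP[x xD ->].
by have [y -> /andP[yA _]] := pkP x xD; apply/imsetP; exists y.
Qed.

Lemma isob_sym n : symmetric (@isob n).
Proof.
suff isob_symI (g h : {ffun 'I_n * 'I_n -> bool}) : isob g h -> isob h g.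
  by move=> g h; apply/idP/idP; apply: isob_symI.
move=> /existsP[p /forallP gh]; apply/existsP; exists p^-1%g.
apply/forallP => x; apply/forallP => y.
by have := forallP (gh (p^-1 x)%g) (p^-1 y)%g; rewrite !permKV eq_sym.
Qed.

Lemma isob_trans n : transitive (@isob n).
Proof.
move=> h g k /existsP[p /forallP gh] /existsP[q /forallP hk]; apply/existsP; exists (p * q)%g.
apply/forallP => x; apply/forallP => y.
by rewrite !permM (eqP (forallP (gh x) y)) (eqP (forallP (hk (p x)) (p y))).
Qed.

Lemma simpleb_simple_graph n (h : {ffun 'I_n * 'I_n -> bool}) :
  simpleb h -> simple_graph (adj_rel h).
Proof. by move=> sh; split => [x y | x]; [exact: simpleb_sym | exact: simpleb_irr]. Qed.

Lemma exists_canonical_iso d n (g : {ffun 'I_n * 'I_n -> bool}) :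
  simpleb g -> S_class d (adj_rel g) ->
  exists2 h, h \in canonical_graphs n (weight_const d ^ n) & isob g h.
Proof.
move=> sg gS; have [s sorted_gs] := exists_nbr_sorted_relabel g.
have s_gs : simpleb (relabel g s).
  apply/andP; split; apply/forallP => x; first apply/forallP => y.
  - by rewrite !ffunE /= simpleb_sym.
  - by rewrite ffunE /= simpleb_irr.
have gsS : S_class d (adj_rel (relabel g s)).
  apply: (S_class_monotone d).1 (simpleb_simple_graph s_gs) gS _.
  exists s; split; first exact: (Bijective (permK s) (permKV s)).
  by move=> x y; rewrite /adj_rel ffunE.
exists (relabel g s).
  rewrite !inE s_gs sorted_gs extra_weight_le // andbT.
  by apply/subsetP => x; rewrite !inE => /andP[_ /andP[]].
apply/existsP; exists s^-1%g; apply/forallP => x; apply/forallP => y.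
by rewrite ffunE /= !permKV.
Qed.

Theorem mainTheorem8 (d : nat) : monotone (S_class d) /\ tiny (S_class d).
Proof.
split; first exact: S_class_monotone.
split; first exact: S_class_hereditary.
exists (INR (8 * weight_const d)) => n.
rewrite -pow_INR -expn_pow; apply/le_INR/leP.
apply: leq_trans (card_equivalence_partition_le (A := canonical_graphs n (weight_const d ^ n))
                   (@isob_sym n) (@isob_trans n) _) _.
  by move=> g; rewrite inE => /andP[sg /asboolP gS]; exact: exists_canonical_iso.
apply: leq_trans (card_canonical_graphs _ _) _.
have eight : 8 ^ n = 2 ^ (n + n) * 2 ^ n.
  by rewrite -expnD -(expnM 2 3) mulSn mul2n -addnn addnA.
by rewrite expnMn eight -mulnA (mulnC (2 ^ n)) leq_mul2r leq_bin_exp2 orbT.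
Qed.
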